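(* Let $\Pi$ be a projective plane of order $q^2$ and let $\phi$ be an embedding of the complete bipartite graph $K_{q^2,q^2}$ into $\Pi$. Then for every Baer subplane $\pi$ of $\Pi$, at least $q$ of the lines of $\Pi$ onto which edges of $K_{q^2,q^2}$ are mapped are lines of $\pi$.
   Context: A finite projective plane of order $Q$ has $Q^2+Q+1$ points and lines, $Q+1$ points on each line and $Q+1$ lines through each point; any two distinct points lie on a unique line and any two lines meet in a unique point. A Baer subplane of a plane of order $q^2$ is a set of points and lines of the plane forming a projective plane of order $q$ under the inherited incidence; its lines are lines of $\Pi$. An embedding of a simple graph $G=(V,E)$ into $\Pi$ is an injective map $\phi$ from $V$ to the points of $\Pi$ such that the induced map $\overline{\phi}$ sending an edge $ab$ to the line through $\phi(a),\phi(b)$ is injective on $E$; the lines $\overline{\phi}(E)$ are the embedded edges. *)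

From mathcomp Require Import all_boot.
Set Implicit Arguments. Unset Strict Implicit. Unset Printing Implicit Defensive.

Definition proj_plane_on (P L : finType) (I : P -> L -> bool) (Q : nat)
    (Ps : {set P}) (Ls : {set L}) : Prop :=
  [/\ #|Ps| = Q ^ 2 + Q + 1 /\ #|Ls| = Q ^ 2 + Q + 1,
      (forall l, l \in Ls -> #|[set x in Ps | I x l]| = Q + 1),
      (forall x, x \in Ps -> #|[set l in Ls | I x l]| = Q + 1),
      (forall x y, x \in Ps -> y \in Ps -> x != y ->
         #|[set l in Ls | I x l && I y l]| = 1) &
      (forall l m, l \in Ls -> m \in Ls -> l != m ->
         #|[set x in Ps | I x l && I x m]| = 1)].

Definition proj_plane (P L : finType) (I : P -> L -> bool) (Q : nat) : Prop :=
  proj_plane_on I Q [set: P] [set: L].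

Definition baer_subplane (P L : finType) (I : P -> L -> bool) (q : nat)
    (Ps : {set P}) (Ls : {set L}) : Prop :=
  proj_plane_on I q Ps Ls.

(* the line through two points (a line incident with both, if any; unique
   when the points are distinct in a projective plane) *)
Definition join (P L : finType) (I : P -> L -> bool) (x y : P) : option L :=
  [pick l | I x l && I y l].

Definition graph_embedding (P L V : finType) (I : P -> L -> bool)
    (e : rel V) (phi : V -> P) : Prop :=
  injective phi /\
  (forall a b c d, e a b -> e c d ->
     join I (phi a) (phi b) = join I (phi c) (phi d) ->
     [set a; b] = [set c; d]).

Definition embedded_edges (P L V : finType) (I : P -> L -> bool)
    (e : rel V) (phi : V -> P) : {set L} :=
  [set l | [exists a, exists b, e a b && (join I (phi a) (phi b) == Some l)]].

Definition Knn_rel (n : nat) : rel ('I_n + 'I_n)%type :=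
  fun x y => match x, y with
             | inl _, inr _ => true
             | inr _, inl _ => true
             | _, _ => false
             end.

From mathcomp Require Import all_boot.
From mathcomp Require Import zify.

Set Implicit Arguments.
Unset Strict Implicit.

(* An embedding of K_{n,n} has n^2 edges, and distinct edges give distinct
   lines, so at least n^2 = q^4 of the q^4 + q^2 + 1 lines are embedded edges.
   Only q^4 - q lines lie outside a Baer subplane, hence at least q embedded
   edges are lines of the subplane. *)

Lemma card_setI_geq (T : finType) (A B : {set T}) :
  #|A| - #|~: B| <= #|A :&: B|.
Proof.
have := cardsID B A; have : #|A :\: B| <= #|~: B|.
  by apply/subset_leq_card; rewrite setDE subsetIr.
lia.
Qed.

Section ProjectivePlane.

Variables (P L : finType) (I : P -> L -> bool) (Q : nat).
Hypothesis plane : proj_plane I Q.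

Lemma join_neq_None (x y : P) : x != y -> join I x y != None.
Proof.
case: plane => _ _ _ one_line _ /(one_line _ _ (in_setT x) (in_setT y)).
rewrite /join; case: pickP => // no_line.
suff -> : [set l in [set: L] | I x l & I y l] = set0 by rewrite cards0.
by apply/setP => l; rewrite !inE no_line.
Qed.

Lemma card_Knn_embedded_edges (n : nat) (phi : ('I_n + 'I_n)%type -> P) :
  graph_embedding I (@Knn_rel n) phi ->
  n * n <= #|embedded_edges I (@Knn_rel n) phi|.
Proof.
move=> [phi_inj edge_inj]; set E := embedded_edges _ _ _.
pose line (ij : 'I_n * 'I_n) := join I (phi (inl ij.1)) (phi (inr ij.2)).
have line_inj : injective line.
  move=> [i j] [i' j'] /(edge_inj (inl i) (inr j) (inl i') (inr j') isT isT).
  move/setP => same; have := same (inl i); have := same (inr j).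
  by rewrite !inE !eqxx /= orbF => /esym/eqP[->] /esym/eqP[->].
have line_E : line @: setT \subset Some @: E.
  apply/subsetP => _ /imsetP[[i j] _ ->].
  have : phi (inl i) != phi (inr j) by apply/eqP => /phi_inj.
  move/join_neq_None; rewrite -/(line (i, j)).
  case Eij: (line (i, j)) => [l|] // _; apply/imset_f.
  by rewrite inE; apply/existsP; exists (inl i); apply/existsP; exists (inr j);
    rewrite /= -/(line (i, j)) Eij.
have <- : #|line @: setT| = n * n.
  by rewrite card_imset // cardsT card_prod card_ord.
by rewrite -(card_imset E Some_inj); apply: subset_leq_card.
Qed.

End ProjectivePlane.

Theorem corollary4p13 (P L : finType) (I : P -> L -> bool) (q : nat)
    (phi : ('I_(q ^ 2) + 'I_(q ^ 2))%type -> P) :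
  proj_plane I (q ^ 2) ->
  graph_embedding I (@Knn_rel (q ^ 2)) phi ->
  forall (Ps : {set P}) (Ls : {set L}),
    baer_subplane I q Ps Ls ->
    q <= #|embedded_edges I (@Knn_rel (q ^ 2)) phi :&: Ls|.
Proof.
move=> plane emb Ps Ls [[_ card_Ls] _ _ _ _].
have card_E := card_Knn_embedded_edges plane emb.
have card_outside : #|~: Ls| + (q ^ 2 + q + 1) = (q ^ 2) ^ 2 + q ^ 2 + 1.
  case: plane => -[_ card_L] _ _ _ _.
  by rewrite -card_Ls addnC cardsC -card_L cardsT.
apply: leq_trans (card_setI_geq _ _); move: card_E card_outside.
have q_le_q2 : q <= q ^ 2 by nia.
nia.
Qed.
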